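(* Let $G,H$ be graphs such that there is a homomorphism $\gamma:V(G)\to V(H)$. If $H\in$ CBU, then $G\in$ CBU.
   Context: Let $e_1,\ldots,e_d$ be the standard basis of $\mathbb{R}^d$. For $d\ge 1$, a graph belongs to $d$-CBU if one can assign to each vertex an axis-parallel box (product of $d$ closed intervals of positive length) in $\mathbb{R}^d$ such that the boxes have pairwise disjoint interiors, two distinct vertices are adjacent iff their boxes intersect, and any two intersecting boxes intersect in a $(d-1)$-dimensional box orthogonal to $e_1$. CBU is the union of $d$-CBU over all $d\ge 1$. *)

From Stdlib Require Import Reals.
From mathcomp Require Import all_boot.
Set Implicit Arguments. Unset Strict Implicit. Unset Printing Implicit Defensive.
Local Open Scope R_scope.

(* Points of R^d are functions nat -> R; only coordinates i < d matter.
   Coordinate 0 corresponds to the direction e_1. *)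

Record box (d : nat) := Box { lo : nat -> R; hi : nat -> R;
  lo_lt_hi : forall i, (i < d)%N -> lo i < hi i }.

Definition in_box d (b : box d) (x : nat -> R) : Prop :=
  forall i, (i < d)%N -> lo b i <= x i <= hi b i.

Definition in_interior d (b : box d) (x : nat -> R) : Prop :=
  forall i, (i < d)%N -> lo b i < x i < hi b i.

Definition interiors_disjoint d (b1 b2 : box d) : Prop :=
  ~ exists x, in_interior b1 x /\ in_interior b2 x.

Definition boxes_intersect d (b1 b2 : box d) : Prop :=
  exists x, in_box b1 x /\ in_box b2 x.

Definition meet_orth_e1 d (b1 b2 : box d) : Prop :=
  exists (c : R) (l u : nat -> R),
    (forall i, (1 <= i < d)%N -> l i < u i) /\
    (forall x : nat -> R, (in_box b1 x /\ in_box b2 x) <->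
       (x 0%N = c /\ forall i, (1 <= i < d)%N -> l i <= x i <= u i)).

Definition in_dCBU (d : nat) (V : finType) (adj : rel V) : Prop :=
  (1 <= d)%N /\
  exists B : V -> box d,
    (forall u v, u <> v -> interiors_disjoint (B u) (B v)) /\
    (forall u v, u <> v -> (adj u v <-> boxes_intersect (B u) (B v))) /\
    (forall u v, u <> v -> boxes_intersect (B u) (B v) -> meet_orth_e1 (B u) (B v)).

Definition in_CBU (V : finType) (adj : rel V) : Prop :=
  exists d, in_dCBU d adj.

From Stdlib Require Import Reals Lra.
From mathcomp Require Import all_boot zify.
Set Implicit Arguments. Unset Strict Implicit. Unset Printing Implicit Defensive.
Local Open Scope R_scope.

(* Keep the box of [gamma g] in the first [d] coordinates and append one
   coordinate per vertex [w] of [G], in which [g] gets [[0,1]] if [g = w],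
   [[0,3]] if [g] is adjacent to [w] and [[2,3]] otherwise.  Adjacent vertices
   then overlap with positive length in every new coordinate, so they inherit
   disjoint interiors and a contact orthogonal to [e_1] from the boxes of their
   images, which are distinct because [gamma] maps edges to edges of a loopless
   graph.  Non-adjacent vertices are separated in the coordinate of one of
   them. *)

Lemma Rmax_Rmin_lt a b c e :
  a < c -> a < e -> b < c -> b < e -> Rmax a b < Rmin c e.
Proof. by rewrite /Rmax /Rmin; do 2 case: Rle_dec; lra. Qed.

Lemma Rmax_Rmin_bounds a b c e x :
  (Rmax a b <= x <= Rmin c e) <-> (a <= x <= c /\ b <= x <= e).
Proof. by rewrite /Rmax /Rmin; do 2 case: Rle_dec; split; lra. Qed.

Lemma forall_range_addn_split (m d e : nat) (P : nat -> Prop) : (m <= d)%N ->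
  (forall i, (m <= i < d + e)%N -> P i) <->
  (forall i, (m <= i < d)%N -> P i) /\ (forall i, (i < e)%N -> P (d + i)%N).
Proof.
move=> le_md; split=> [HP | [Pl Pr] i /andP [le_mi lt_i]].
- by split=> i Hi; apply: HP; lia.
- case: (ltnP i d) => [lt_id | le_di]; first by apply: Pl; rewrite le_mi.
  by rewrite -(subnKC le_di); apply: Pr; lia.
Qed.

Lemma forall_ltn_addn_split (d e : nat) (P : nat -> Prop) :
  (forall i, (i < d + e)%N -> P i) <->
  (forall i, (i < d)%N -> P i) /\ (forall i, (i < e)%N -> P (d + i)%N).
Proof.
split=> [HP | [Pl Pr] i lt_i]; first by split=> i Hi; apply: HP; lia.
case: (ltnP i d) => [/Pl // | le_di].
by rewrite -(subnKC le_di); apply: Pr; lia.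
Qed.

Lemma in_box_ext d (b : box d) x y :
  (forall i, (i < d)%N -> x i = y i) -> in_box b x -> in_box b y.
Proof. by move=> Exy Hx i Hi; rewrite -Exy //; apply: Hx. Qed.

Definition boxes_overlap n (b1 b2 : box n) : Prop :=
  forall i, (i < n)%N -> Rmax (lo b1 i) (lo b2 i) < Rmin (hi b1 i) (hi b2 i).

Lemma boxes_overlap_intersect n (b1 b2 : box n) :
  boxes_overlap b1 b2 -> boxes_intersect b1 b2.
Proof.
move=> Hover; exists (fun i => Rmax (lo b1 i) (lo b2 i)).
suff Hx i : (i < n)%N ->
    lo b1 i <= Rmax (lo b1 i) (lo b2 i) <= hi b1 i /\
    lo b2 i <= Rmax (lo b1 i) (lo b2 i) <= hi b2 i.
  by split=> i Hi; case: (Hx i Hi).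
by move=> Hi; apply/Rmax_Rmin_bounds; have := Hover i Hi; lra.
Qed.

Lemma interiors_disjoint_of_not_intersect n (b1 b2 : box n) :
  ~ boxes_intersect b1 b2 -> interiors_disjoint b1 b2.
Proof.
move=> Hsep [x [Hx1 Hx2]]; apply: Hsep; exists x.
by split=> i Hi; [have := Hx1 i Hi | have := Hx2 i Hi]; lra.
Qed.

Section BoxConcatenation.

Variables d e : nat.

Definition cat_fun (f g : nat -> R) (i : nat) : R :=
  if (i < d)%N then f i else g (i - d)%N.

Lemma cat_fun_l f g i : (i < d)%N -> cat_fun f g i = f i.
Proof. by rewrite /cat_fun => ->. Qed.

Lemma cat_fun_r f g i : cat_fun f g (d + i) = g i.
Proof. by rewrite /cat_fun ltnNge leq_addr addKn. Qed.

Definition shift (x : nat -> R) (i : nat) : R := x (d + i)%N.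

Lemma box_cat_subproof (b : box d) (c : box e) i : (i < d + e)%N ->
  cat_fun (lo b) (lo c) i < cat_fun (hi b) (hi c) i.
Proof.
move: i; apply/forall_ltn_addn_split; split=> i Hi.
- by rewrite !cat_fun_l //; apply: lo_lt_hi.
- by rewrite !cat_fun_r; apply: lo_lt_hi.
Qed.

Definition box_cat (b : box d) (c : box e) : box (d + e) :=
  Box (@box_cat_subproof b c).

Lemma in_box_cat b c x :
  in_box (box_cat b c) x <-> in_box b x /\ in_box c (shift x).
Proof.
rewrite /in_box /= forall_ltn_addn_split; split=> [] [Hl Hr]; split=> i Hi.
- by rewrite -(cat_fun_l (lo b) (lo c) Hi) -(cat_fun_l (hi b) (hi c) Hi); apply: Hl.
- by rewrite -(cat_fun_r (lo b) (lo c)) -(cat_fun_r (hi b) (hi c)); apply: Hr.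
- by rewrite !cat_fun_l //; apply: Hl.
- by rewrite !cat_fun_r; apply: Hr.
Qed.

Lemma in_interior_cat b c x :
  in_interior (box_cat b c) x -> in_interior b x.
Proof. by move=> Hx i Hi; have := Hx i (ltn_addr e Hi); rewrite /= !cat_fun_l. Qed.

Lemma boxes_intersect_cat b1 b2 c1 c2 :
  boxes_intersect (box_cat b1 c1) (box_cat b2 c2) <->
  boxes_intersect b1 b2 /\ boxes_intersect c1 c2.
Proof.
split=> [[x [/in_box_cat [Hb1 Hc1] /in_box_cat [Hb2 Hc2]]] |
         [[x [Hb1 Hb2]] [y [Hc1 Hc2]]]].
  by split; [exists x | exists (shift x)].
have cat_l : forall i, (i < d)%N -> x i = cat_fun x y i.
  by move=> i Hi; rewrite cat_fun_l.
have cat_r : forall i, (i < e)%N -> y i = shift (cat_fun x y) i.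
  by move=> i _; rewrite /shift cat_fun_r.
by exists (cat_fun x y); split; apply/in_box_cat; split;
  apply: in_box_ext; eassumption.
Qed.

Lemma interiors_disjoint_cat b1 b2 c1 c2 : interiors_disjoint b1 b2 ->
  interiors_disjoint (box_cat b1 c1) (box_cat b2 c2).
Proof.
by move=> Hdisj [x [/in_interior_cat Hx1 /in_interior_cat Hx2]]; apply: Hdisj; exists x.
Qed.

Lemma meet_orth_e1_cat b1 b2 c1 c2 : (0 < d)%N ->
  meet_orth_e1 b1 b2 -> boxes_overlap c1 c2 ->
  meet_orth_e1 (box_cat b1 c1) (box_cat b2 c2).
Proof.
move=> d_gt0 [c [l [u [lt_lu Hmeet]]]] Hover.
exists c, (cat_fun l (fun i => Rmax (lo c1 i) (lo c2 i))),
  (cat_fun u (fun i => Rmin (hi c1 i) (hi c2 i))); split.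
  apply/forall_range_addn_split => //; split=> i Hi.
    by rewrite !cat_fun_l; [apply: lt_lu | case/andP: Hi..].
  by rewrite !cat_fun_r; apply: Hover.
move=> x; rewrite (@forall_range_addn_split 1 d e _ d_gt0) !in_box_cat.
have El : (forall i, (1 <= i < d)%N -> l i <= x i <= u i) <->
  (forall i, (1 <= i < d)%N ->
     cat_fun l (fun i => Rmax (lo c1 i) (lo c2 i)) i <= x i <=
     cat_fun u (fun i => Rmin (hi c1 i) (hi c2 i)) i).
  by split=> H i /[dup] Hi /andP [_ lt_id]; have := H i Hi; rewrite !cat_fun_l.
have Er : in_box c1 (shift x) /\ in_box c2 (shift x) <->
  (forall i, (i < e)%N ->
     cat_fun l (fun i => Rmax (lo c1 i) (lo c2 i)) (d + i)%N <= x (d + i)%N <=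
     cat_fun u (fun i => Rmin (hi c1 i) (hi c2 i)) (d + i)%N).
  split=> [[H1 H2] i Hi | H].
    by rewrite !cat_fun_r; apply/Rmax_Rmin_bounds; split; [apply: H1 | apply: H2].
  by split=> i Hi; have := H i Hi; rewrite !cat_fun_r => /Rmax_Rmin_bounds [].
have := Hmeet x; tauto.
Qed.

End BoxConcatenation.

Section NeighbourhoodBoxes.

Variables (V : finType) (adj : rel V).

Definition nbhd_lo (w g : V) : R := if (g == w) || adj g w then 0 else 2.
Definition nbhd_hi (w g : V) : R := if g == w then 1 else 3.

Lemma nbhd_lo_lt_hi w g : nbhd_lo w g < nbhd_hi w g.
Proof. by rewrite /nbhd_lo /nbhd_hi; case: eqP => _ /=; [lra | case: (adj _ _); lra]. Qed.

(* Coordinate [i] belongs to the vertex [nth g (enum V) i]; the default [g]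
   is never reached for [i < #|V|]. *)
Definition nbhd_box (g : V) : box #|V| :=
  @Box #|V| (fun i => nbhd_lo (nth g (enum V) i) g)
    (fun i => nbhd_hi (nth g (enum V) i) g) (fun i _ => nbhd_lo_lt_hi _ _).

Lemma nbhd_intervals_overlap w g g' : symmetric adj -> adj g g' ->
  Rmax (nbhd_lo w g) (nbhd_lo w g') < Rmin (nbhd_hi w g) (nbhd_hi w g').
Proof.
move=> adj_sym A; have A' : adj g' g by rewrite adj_sym.
rewrite /nbhd_lo /nbhd_hi; case: eqVneq => [<-|_]; case: eqVneq => [<-|_] /=;
    rewrite ?A ?A'; case: (adj g w); case: (adj g' w); apply: Rmax_Rmin_lt; lra.
Qed.

Lemma nbhd_boxes_overlap g g' : symmetric adj -> adj g g' ->
  boxes_overlap (nbhd_box g) (nbhd_box g').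
Proof.
move=> adj_sym A i Hi /=; rewrite cardE in Hi.
by rewrite (set_nth_default g g' Hi); apply: nbhd_intervals_overlap.
Qed.

Lemma nbhd_boxes_separate g g' : g <> g' -> ~~ adj g g' ->
  ~ boxes_intersect (nbhd_box g) (nbhd_box g').
Proof.
move=> neq_gg' nA [x [H1 H2]].
have Hi : (index g' (enum V) < #|V|)%N by rewrite cardE index_mem mem_enum.
have := H1 _ Hi; have := H2 _ Hi; rewrite /= !nth_index ?mem_enum //.
rewrite /nbhd_lo /nbhd_hi eqxx (negbTE nA); case: eqVneq => [E|_] /=.
  by case: neq_gg'.
lra.
Qed.

End NeighbourhoodBoxes.

Theorem mainTheorem16 (VG VH : finType) (adjG : rel VG) (adjH : rel VH)
  (symG : symmetric adjG) (irrG : irreflexive adjG)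
  (symH : symmetric adjH) (irrH : irreflexive adjH)
  (gamma : VG -> VH)
  (hom : forall x y, adjG x y -> adjH (gamma x) (gamma y)) :
  in_CBU adjH -> in_CBU adjG.
Proof.
move=> [d [d_gt0 [B [Bdisj [Badj Bmeet]]]]].
have gamma_edge g g' : adjG g g' -> gamma g <> gamma g'.
  by move=> /hom A E; rewrite E irrH in A.
pose NB g := box_cat (B (gamma g)) (nbhd_box adjG g).
suff NB_pair g g' : g <> g' -> [/\ interiors_disjoint (NB g) (NB g'),
    adjG g g' <-> boxes_intersect (NB g) (NB g') &
    boxes_intersect (NB g) (NB g') -> meet_orth_e1 (NB g) (NB g')].
  exists (d + #|VG|)%N; split; first by rewrite addn_gt0 d_gt0.
  by exists NB; split; [|split]=> g g' /NB_pair [].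
move=> neq_gg'; case A: (adjG g g').
- have neq_gamma := gamma_edge _ _ A.
  have B_meet : boxes_intersect (B (gamma g)) (B (gamma g')).
    by apply/Badj => //; apply: hom.
  have nbhd_over := nbhd_boxes_overlap symG A.
  split; [exact/interiors_disjoint_cat/Bdisj | split=> // _ |].
    by apply/boxes_intersect_cat; split=> //; apply: boxes_overlap_intersect.
  by move=> _; apply: meet_orth_e1_cat => //; apply: Bmeet.
- have NB_sep : ~ boxes_intersect (NB g) (NB g').
    by move/boxes_intersect_cat => [_]; apply: nbhd_boxes_separate; rewrite ?A.
  by split=> //; exact: interiors_disjoint_of_not_intersect.
Qed.
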